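(* Under the standing assumptions of the context, $\|m_l'-(m^M)'\|_C=O(\mu(l))$ as $l\to\infty$.
   Context: Let $\theta$ be odd, non-decreasing, $C^2$, with $\theta(\omega)=\pi/4$ for $\omega>\pi/3$; fix $\pi/3\le\omega_0<\pi/2$. Meyer scaling function (Fourier transform): $\widehat{\varphi^M}(\omega)=1$ for $|\omega|\le2\omega_0$, $=\cos(\frac\pi4+\theta(\frac{\pi}{3(\pi-2\omega_0)}(|\omega|-\pi)))$ for $2\omega_0<|\omega|\le2\pi-2\omega_0$, $=0$ otherwise. Meyer mask: $2\pi$-periodic $m^M$ with $m^M(\omega)=\widehat{\varphi^M}(2\omega)$ on $[-\pi,\pi]$. $\|\cdot\|_C$: sup norm on $[-\pi,\pi]$. A linear method of summation $(\lambda_{n,k})$ maps $f$ with Fourier coefficients $a_k,b_k$ to $u_n(f,\omega)=\frac{a_0}2+\sum_{k=1}^n\lambda_{n,k}(a_k\cos k\omega+b_k\sin k\omega)$. $m^M_l:=m^M/(\cos\frac\omega2)^{2l}$. Standing assumptions: a method and a sequence $n(l)$ are fixed with $u_l:=u_{n(l)}(m^M_l,\cdot)$, $u_{1,l}:=u_{n(l)}((m^M_l)',\cdot)$ satisfying $\alpha(l):=\|u_l-m^M_l\|_C=o(l^{-1})$, $\gamma(l):=\|u_{1,l}-(m^M_l)'\|_C=o(1)$, $u_l(\pi)\ne0$; $l_0$ is fixed with $\inf_{l\ge l_0}|u_l(0)|>0$ and $l\ge l_0$. $\mu(l):=l\alpha(l)+\gamma(l)$. $m_l(\omega):=(\cos\frac\omega2)^{2l}u_l(\omega)/u_l(0)$.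 *)

From Stdlib Require Import Reals.
From Coquelicot Require Import Coquelicot.
Open Scope R_scope.

(* Meyer scaling function (Fourier transform), parameters theta, w0. *)
Definition phiM (theta : R -> R) (w0 : R) (w : R) : R :=
  if Rle_dec (Rabs w) (2 * w0) then 1
  else if Rle_dec (Rabs w) (2 * PI - 2 * w0) then
    cos (PI / 4 + theta (PI / (3 * (PI - 2 * w0)) * (Rabs w - PI)))
  else 0.

Definition redpi (w : R) : R := w - 2 * PI * IZR (Int_part ((w + PI) / (2 * PI))).

(* Meyer mask: 2*PI-periodic, equal to phiM(2 w) on [-PI, PI]. *)
Definition mM (theta : R -> R) (w0 : R) (w : R) : R := phiM theta w0 (2 * redpi w).

(* m^M_l := m^M / (cos (w/2))^(2l)  (at w = PI (mod 2PI), m^M vanishes and the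
   Rocq value x/0 = 0 gives the continuous extension by 0). *)
Definition mMl (theta : R -> R) (w0 : R) (l : nat) (w : R) : R :=
  mM theta w0 w / (cos (w / 2)) ^ (2 * l).

Definition fa (f : R -> R) (k : nat) : R := / PI * RInt (fun t => f t * cos (INR k * t)) (- PI) PI.
Definition fb (f : R -> R) (k : nat) : R := / PI * RInt (fun t => f t * sin (INR k * t)) (- PI) PI.

Definition usum (lam : nat -> nat -> R) (n : nat) (f : R -> R) (w : R) : R :=
  fa f 0 / 2 + sum_n_m (fun k => lam n k * (fa f k * cos (INR k * w) + fb f k * sin (INR k * w))) 1 n.

Definition supC (f : R -> R) : R :=
  real (Lub_Rbar (fun y => exists x, - PI <= x <= PI /\ y = Rabs (f x))).

Section Std.
Variables (theta : R -> R) (w0 : R) (lam : nat -> nat -> R) (nl : nat -> nat).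

Definition ul (l : nat) : R -> R := usum lam (nl l) (mMl theta w0 l).
Definition u1l (l : nat) : R -> R := usum lam (nl l) (Derive (mMl theta w0 l)).
Definition alpha (l : nat) : R := supC (fun w => ul l w - mMl theta w0 l w).
Definition gamma (l : nat) : R := supC (fun w => u1l l w - Derive (mMl theta w0 l) w).
Definition mu (l : nat) : R := INR l * alpha l + gamma l.
Definition ml (l : nat) (w : R) : R := (cos (w / 2)) ^ (2 * l) * ul l w / ul l 0.
End Std.

(* Write P(w) = cos(w/2)^(2l).  The mask m^M vanishes wherever P does, so m^M = P m^M_l,
   while m_l = P u_l / u_l(0); and since m^M_l vanishes at +-PI, integration by parts shows that
   the method commutes with differentiation: u_l' = u_{1,l}.  Hence
     m_l' - (m^M)' = [P' (u_l - m^M_l) + P (u_{1,l} - (m^M_l)')] / u_l(0)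
                     + (m^M)' (1 - u_l(0)) / u_l(0),
   and |P'| <= l, |P| <= 1, |1 - u_l(0)| = |m^M_l(0) - u_l(0)| <= alpha(l), |u_l(0)| >= c
   bound this by (1 + ||(m^M)'||_C) / c * (l alpha(l) + gamma(l)). *)

From Stdlib Require Import Reals Lra Lia.
From Coquelicot Require Import Coquelicot.
Open Scope R_scope.

Definition C1 (f : R -> R) : Prop :=
  forall y, ex_derive f y /\ continuous (Derive f) y.

Definition C1_at (f : R -> R) (x : R) : Prop :=
  locally x (fun y => ex_derive f y) /\ continuous (Derive f) x.

Lemma locally_Rabs (P : R -> Prop) x d :
  0 < d -> (forall y, Rabs (y - x) < d -> P y) -> locally x P.
Proof. intros Hd HP; exists (mkposreal d Hd); intros y Hy; apply HP, Hy. Qed.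

Lemma ex_derive_cont (f : R -> R) x : ex_derive f x -> continuous f x.
Proof. intros Hf; exact (ex_derive_continuous f x Hf). Qed.

Lemma C1_C1_at f x : C1 f -> C1_at f x.
Proof. intros Hf; split; [apply filter_forall; intros y|]; apply Hf. Qed.

Lemma C1_at_ext_loc f g x : locally x (fun y => f y = g y) -> C1_at g x -> C1_at f x.
Proof.
  intros Hfg [Hd Hc]; apply locally_locally in Hfg; split.
  - apply (filter_imp (fun y => locally y (fun z => f z = g z) /\ ex_derive g y));
      [|now apply filter_and].
    intros y [Hy Hgy]; apply (ex_derive_ext_loc g f y); [|exact Hgy].
    exact (filter_imp _ _ (fun z Hz => eq_sym Hz) Hy).
  - apply (continuous_ext_loc _ (Derive g)); [|exact Hc].
    exact (filter_imp _ _ (fun y Hy => eq_sym (Derive_ext_loc _ _ _ Hy)) Hfg).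
Qed.

Lemma C1_of_is_derive f f' :
  (forall y, is_derive f y (f' y)) -> (forall y, continuous f' y) -> C1 f.
Proof.
  intros Hf Hf' y; split; [eexists; apply Hf|].
  apply (continuous_ext f'); [|apply Hf'].
  intros z; symmetry; apply is_derive_unique, Hf.
Qed.

Lemma C1_const c : C1 (fun _ => c).
Proof.
  apply (C1_of_is_derive _ (fun _ => 0)); [intros; apply (is_derive_const c)|].
  intros; apply continuous_const.
Qed.

Lemma C1_cos : C1 cos.
Proof.
  apply (C1_of_is_derive _ (fun y => - sin y)); [intros y; auto_derive; auto; ring|].
  intros y; apply (continuous_opp sin), continuity_pt_filterlim, continuity_sin.
Qed.

Lemma C1_plus f g : C1 f -> C1 g -> C1 (fun y => f y + g y).
Proof.
  intros Hf Hg y; split; [apply (ex_derive_plus f g); [apply Hf|apply Hg]|].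
  apply (continuous_ext (fun z => Derive f z + Derive g z)).
  - intros z; rewrite (Derive_plus f g z); auto; [apply Hf|apply Hg].
  - apply (continuous_plus (fun z => Derive f z) (fun z => Derive g z)); [apply Hf|apply Hg].
Qed.

Lemma C1_mult f g : C1 f -> C1 g -> C1 (fun y => f y * g y).
Proof.
  intros Hf Hg y; split; [apply (ex_derive_mult f g); [apply Hf|apply Hg]|].
  apply (continuous_ext (fun z => Derive f z * g z + f z * Derive g z)).
  - intros z; rewrite (Derive_mult f g z); auto; [apply Hf|apply Hg].
  - apply (continuous_plus (fun z => Derive f z * g z) (fun z => f z * Derive g z)).
    + apply (continuous_mult (fun z => Derive f z) g);
        [apply Hf|apply ex_derive_cont, Hg].
    + apply (continuous_mult f (fun z => Derive g z));
        [apply ex_derive_cont, Hf|apply Hg].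
Qed.

Lemma C1_comp f g : C1 f -> C1 g -> C1 (fun y => f (g y)).
Proof.
  intros Hf Hg y; split; [apply ex_derive_comp; [apply Hf|apply Hg]|].
  apply (continuous_ext (fun z => Derive g z * Derive f (g z))).
  - intros z; rewrite (Derive_comp f g z); auto; [apply Hf|apply Hg].
  - apply (continuous_mult (fun z => Derive g z) (fun z => Derive f (g z))); [apply Hg|].
    apply continuous_comp; [apply ex_derive_cont, Hg|apply Hf].
Qed.

Lemma C1_pow f n : C1 f -> C1 (fun y => f y ^ n).
Proof.
  intros Hf; induction n as [|n IH]; [exact (C1_const 1)|].
  exact (C1_mult f (fun y => f y ^ n) Hf IH).
Qed.

Lemma C1_at_div f g x : C1_at f x -> C1 g -> g x <> 0 -> C1_at (fun y => f y / g y) x.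
Proof.
  intros [Hf Hf'] Hg Hgx.
  assert (Hgc : continuous g x) by apply ex_derive_cont, Hg.
  assert (Hfc : continuous f x) by apply ex_derive_cont, (locally_singleton _ _ Hf).
  assert (Hnz : locally x (fun y => g y <> 0)).
  { destruct (proj1 (continuity_pt_locally g x) (proj2 (continuity_pt_filterlim g x) Hgc)
      (mkposreal _ (Rabs_pos_lt _ Hgx))) as [d Hd].
    exists d; intros y Hy E; specialize (Hd y Hy); simpl in Hd.
    rewrite E, Rminus_0_l, Rabs_Ropp in Hd; lra. }
  assert (Hloc : locally x (fun y => ex_derive f y /\ g y <> 0)) by now apply filter_and.
  split.
  - apply (filter_imp _ _
      (fun y Hy => ex_derive_div f g y (proj1 Hy) (proj1 (Hg y)) (proj2 Hy)) Hloc).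
  - apply (continuous_ext_loc _ (fun y => (Derive f y * g y - f y * Derive g y) / g y ^ 2)).
    + apply (filter_imp _ _
        (fun y Hy => eq_sym (Derive_div f g y (proj1 Hy) (proj1 (Hg y)) (proj2 Hy))) Hloc).
    + apply (continuous_mult (fun y => Derive f y * g y - f y * Derive g y) (fun y => / g y ^ 2)).
      * apply (continuous_plus (fun y => Derive f y * g y) (fun y => opp (f y * Derive g y))).
        -- exact (continuous_mult (fun z => Derive f z) g x Hf' Hgc).
        -- apply (continuous_opp (fun y => f y * Derive g y)).
           exact (continuous_mult f (fun z => Derive g z) x Hfc (proj2 (Hg x))).
      * apply continuous_Rinv_comp; [|now apply pow_nonzero].
        apply (continuous_ext (fun y => g y * (g y * 1))); [reflexivity|].
        apply (continuous_mult g (fun y => g y * 1)); [exact Hgc|].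
        apply (continuous_mult g (fun _ => 1)); [exact Hgc|apply continuous_const].
Qed.

Lemma Int_part_eq x n : IZR n <= x < IZR n + 1 -> Int_part x = n.
Proof.
  intros [H1 H2]; destruct (base_Int_part x) as [H3 H4].
  assert (A1 : IZR (Int_part x - n) < 1) by (rewrite minus_IZR; lra).
  assert (A2 : -1 < IZR (Int_part x - n)) by (rewrite minus_IZR; lra).
  apply lt_IZR in A1; apply lt_IZR in A2; lia.
Qed.

Lemma redpi_eq n y :
  (2 * IZR n - 1) * PI <= y < (2 * IZR n + 1) * PI -> redpi y = y - 2 * PI * IZR n.
Proof.
  intros Hy; pose proof PI_RGT_0; unfold redpi.
  rewrite (Int_part_eq _ n); [reflexivity|].
  split; [apply (Rmult_le_reg_r (2 * PI))|apply (Rmult_lt_reg_r (2 * PI))];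
    try lra; field_simplify; lra.
Qed.

Lemma is_derive_sum_n_m (F dF : nat -> R -> R) n w :
  (forall k, is_derive (F k) w (dF k w)) ->
  is_derive (fun x => sum_n_m (fun k => F k x) 1 n) w (sum_n_m (fun k => dF k w) 1 n).
Proof.
  intros HF; induction n as [|n IH].
  - apply (is_derive_ext (fun _ => 0)); [intros; rewrite sum_n_m_zero; auto|].
    rewrite sum_n_m_zero; [apply (is_derive_const 0)|auto].
  - apply (is_derive_ext (fun x => sum_n_m (fun k => F k x) 1 n + F (S n) x));
      [intros; rewrite sum_n_Sm; [reflexivity|lia]|].
    rewrite sum_n_Sm by lia; exact (is_derive_plus _ _ _ _ _ IH (HF (S n))).
Qed.

Lemma is_derive_usum lam n g w : is_derive (usum lam n g) w
  (sum_n_m (fun k => lam n k * (INR k * (fb g k * cos (INR k * w) - fa g k * sin (INR k * w)))) 1 n).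
Proof.
  unfold usum; rewrite <- (Rplus_0_l (sum_n_m _ 1 n)).
  apply (is_derive_plus (fun _ => fa g 0 / 2)); [apply (is_derive_const (fa g 0 / 2))|].
  apply (is_derive_sum_n_m
    (fun k x => lam n k * (fa g k * cos (INR k * x) + fb g k * sin (INR k * x)))
    (fun k x => lam n k * (INR k * (fb g k * cos (INR k * x) - fa g k * sin (INR k * x))))).
  intros k; auto_derive; auto; ring.
Qed.

Lemma continuous_usum lam n g w : continuous (usum lam n g) w.
Proof. apply ex_derive_cont; eexists; apply is_derive_usum. Qed.

Section FourierDerivative.
Variable f : R -> R.
Hypothesis f_C1 : forall x, - PI <= x <= PI -> C1_at f x.
Hypothesis f_PI : f PI = 0.
Hypothesis f_mPI : f (- PI) = 0.

Let in_period x : Rmin (- PI) PI <= x <= Rmax (- PI) PI -> - PI <= x <= PI.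
Proof. pose proof PI_RGT_0; rewrite Rmin_left, Rmax_right by lra; auto. Qed.

Let f_derivable x : - PI <= x <= PI -> ex_derive f x.
Proof. intros Hx; exact (locally_singleton _ _ (proj1 (f_C1 x Hx))). Qed.

Let f_cont x : - PI <= x <= PI -> continuous f x.
Proof. intros Hx; apply ex_derive_cont, f_derivable, Hx. Qed.

Let is_RInt_period (g : R -> R) :
  (forall x, - PI <= x <= PI -> continuous g x) -> is_RInt g (- PI) PI (RInt g (- PI) PI).
Proof.
  intros Hg; apply (RInt_correct (V := R_CompleteNormedModule)),
    (ex_RInt_continuous (V := R_CompleteNormedModule)); intros z Hz; apply Hg, in_period, Hz.
Qed.

Lemma RInt_Derive_mul (c s : R -> R) :
  (forall x, is_derive c x (s x)) -> (forall x, continuous s x) ->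
  RInt (fun t => Derive f t * c t) (- PI) PI = - RInt (fun t => f t * s t) (- PI) PI.
Proof.
  intros Hc Hs.
  assert (Hcc : forall x, continuous c x) by (intros x; apply ex_derive_cont; eexists; apply Hc).
  assert (Hi1 : forall x, - PI <= x <= PI -> continuous (fun t => Derive f t * c t) x)
    by (intros x Hx; exact (continuous_mult (fun t => Derive f t) c x (proj2 (f_C1 x Hx)) (Hcc x))).
  assert (Hi2 : forall x, - PI <= x <= PI -> continuous (fun t => f t * s t) x)
    by (intros x Hx; exact (continuous_mult f s x (f_cont x Hx) (Hs x))).
  assert (Hsum : is_RInt (fun t => Derive f t * c t + f t * s t) (- PI) PI 0).
  { replace 0 with (minus (f PI * c PI) (f (- PI) * c (- PI)))
      by (rewrite f_PI, f_mPI; unfold minus, plus, opp; simpl; ring).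
    apply (is_RInt_derive (fun t => f t * c t)).
    - intros x Hx; apply in_period in Hx.
      apply (is_derive_mult f c); [apply Derive_correct, f_derivable, Hx|apply Hc|].
      intros; apply Rmult_comm.
    - intros x Hx; apply in_period in Hx.
      exact (continuous_plus (fun t => Derive f t * c t) (fun t => f t * s t) x
        (Hi1 x Hx) (Hi2 x Hx)). }
  assert (Hsum' := is_RInt_plus _ _ _ _ _ _ (is_RInt_period _ Hi1) (is_RInt_period _ Hi2)).
  assert (E := is_RInt_unique _ _ _ _ Hsum); erewrite is_RInt_unique in E by exact Hsum'.
  unfold plus in E; simpl in E; lra.
Qed.

Let RInt_period_scal (g : R -> R) (a : R) : (forall x, - PI <= x <= PI -> continuous g x) ->
  RInt (fun t => a * g t) (- PI) PI = a * RInt g (- PI) PI.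
Proof. intros Hg; exact (is_RInt_unique _ _ _ _ (is_RInt_scal _ _ _ a _ (is_RInt_period g Hg))). Qed.

Let continuous_cos_mode k x : continuous (fun t => cos (INR k * t)) x.
Proof. apply ex_derive_cont; auto_derive; auto. Qed.

Let continuous_sin_mode k x : continuous (fun t => sin (INR k * t)) x.
Proof. apply ex_derive_cont; auto_derive; auto. Qed.

Lemma fa_Derive k : fa (Derive f) k = INR k * fb f k.
Proof.
  unfold fa, fb.
  rewrite (RInt_Derive_mul _ (fun t => - INR k * sin (INR k * t))); [|intros; auto_derive; auto; ring|].
  - rewrite (RInt_ext _ (fun t => - INR k * (f t * sin (INR k * t)))) by (intros; simpl; ring).
    rewrite RInt_period_scal; [ring|].
    intros x Hx; exact (continuous_mult f _ x (f_cont x Hx) (continuous_sin_mode k x)).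
  - intros x; apply (continuous_mult (fun _ => - INR k)); [apply continuous_const|].
    exact (continuous_sin_mode k x).
Qed.

Lemma fb_Derive k : fb (Derive f) k = - INR k * fa f k.
Proof.
  unfold fa, fb.
  rewrite (RInt_Derive_mul _ (fun t => INR k * cos (INR k * t))); [|intros; auto_derive; auto; ring|].
  - rewrite (RInt_ext _ (fun t => INR k * (f t * cos (INR k * t)))) by (intros; simpl; ring).
    rewrite RInt_period_scal; [ring|].
    intros x Hx; exact (continuous_mult f _ x (f_cont x Hx) (continuous_cos_mode k x)).
  - intros x; apply (continuous_mult (fun _ => INR k)); [apply continuous_const|].
    exact (continuous_cos_mode k x).
Qed.

Lemma is_derive_usum_Derive lam n w : is_derive (usum lam n f) w (usum lam n (Derive f) w).
Proof.
  replace (usum lam n (Derive f) w) with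
    (sum_n_m (fun k => lam n k * (INR k * (fb f k * cos (INR k * w) - fa f k * sin (INR k * w)))) 1 n);
    [apply is_derive_usum|].
  unfold usum; rewrite fa_Derive, Rmult_0_l, Rdiv_0_l, Rplus_0_l.
  apply sum_n_m_ext; intros k; rewrite fa_Derive, fb_Derive; simpl; ring.
Qed.

End FourierDerivative.

Lemma supC_le f b : (forall x, - PI <= x <= PI -> Rabs (f x) <= b) -> supC f <= b.
Proof.
  intros Hb; pose proof PI_RGT_0; unfold supC.
  destruct (Lub_Rbar_correct (fun y => exists x, - PI <= x <= PI /\ y = Rabs (f x))) as [_ Hlub].
  assert (Hub : is_ub_Rbar (fun y => exists x, - PI <= x <= PI /\ y = Rabs (f x)) b)
    by (intros y [x [Hx ->]]; apply Hb, Hx).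
  specialize (Hlub _ Hub); destruct (Lub_Rbar _); simpl in *; [exact Hlub|contradiction|].
  assert (Rabs (f 0) <= b) by (apply Hb; lra); pose proof (Rabs_pos (f 0)); lra.
Qed.

Lemma Rabs_le_supC f : (forall x, - PI <= x <= PI -> continuous f x) ->
  forall x, - PI <= x <= PI -> Rabs (f x) <= supC f.
Proof.
  intros Hc x Hx; unfold supC.
  destruct (bounded_continuity (K := R_AbsRing) (V := R_NormedModule) f (- PI) PI Hc) as [M HM].
  destruct (Lub_Rbar_correct (fun y => exists x, - PI <= x <= PI /\ y = Rabs (f x))) as [Hub Hlub].
  assert (HubM : is_ub_Rbar (fun y => exists x, - PI <= x <= PI /\ y = Rabs (f x)) M)
    by (intros y [z [Hz ->]]; left; apply (HM z Hz)).
  specialize (Hlub _ HubM); specialize (Hub (Rabs (f x)) (ex_intro _ x (conj Hx eq_refl))).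
  destruct (Lub_Rbar _); simpl in *; [exact Hub|contradiction|contradiction].
Qed.

Lemma is_derive_cos_half_pow l w : is_derive (fun y => cos (y / 2) ^ (2 * l)) w
  (- INR l * sin (w / 2) * cos (w / 2) ^ pred (2 * l)).
Proof.
  auto_derive; auto; replace (l + (l + 0))%nat with (2 * l)%nat by lia.
  rewrite mult_INR; change (INR 2) with 2; change (w * / 2) with (w / 2); field.
Qed.

Lemma Rabs_pow_le_1 x n : Rabs x <= 1 -> Rabs (x ^ n) <= 1.
Proof.
  intros Hx; rewrite <- RPow_abs, <- (pow1 n); apply pow_incr; split; [apply Rabs_pos|exact Hx].
Qed.

Lemma Rabs_derive_cos_half_pow_le l w :
  Rabs (- INR l * sin (w / 2) * cos (w / 2) ^ pred (2 * l)) <= INR l.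
Proof.
  rewrite !Rabs_mult, Rabs_Ropp, Rabs_pos_eq by apply pos_INR.
  rewrite <- (Rmult_1_r (INR l)) at 2; rewrite Rmult_assoc.
  apply Rmult_le_compat_l; [apply pos_INR|]; rewrite <- (Rmult_1_r 1).
  apply Rmult_le_compat; try apply Rabs_pos; [apply Rabs_le, SIN_bound|].
  apply Rabs_pow_le_1, Rabs_le, COS_bound.
Qed.

Lemma Rabs_quotient_error_le (dP P u M u1 M' u0 l a g c B : R) :
  0 < c -> c <= Rabs u0 -> 1 <= l -> Rabs dP <= l -> Rabs P <= 1 ->
  Rabs (u - M) <= a -> Rabs (u1 - M') <= g -> Rabs (1 - u0) <= a ->
  Rabs (dP * M + P * M') <= B ->
  Rabs ((dP * u + P * u1) / u0 - (dP * M + P * M')) <= (1 + B) / c * (l * a + g).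
Proof.
  intros Hc Hu0 Hl HdP HP Hu Hu1 H1u0 HB.
  assert (Hu0n : u0 <> 0) by (intros E; rewrite E, Rabs_R0 in Hu0; lra).
  replace ((dP * u + P * u1) / u0 - (dP * M + P * M'))
    with ((dP * (u - M) + P * (u1 - M') + (dP * M + P * M') * (1 - u0)) / u0) by (field; exact Hu0n).
  rewrite Rabs_div by exact Hu0n.
  assert (Hnum : Rabs (dP * (u - M) + P * (u1 - M') + (dP * M + P * M') * (1 - u0))
                 <= (1 + B) * (l * a + g)).
  { pose proof (Rabs_triang (dP * (u - M) + P * (u1 - M')) ((dP * M + P * M') * (1 - u0))).
    pose proof (Rabs_triang (dP * (u - M)) (P * (u1 - M'))).
    rewrite !Rabs_mult in *.
    assert (T1 : Rabs dP * Rabs (u - M) <= l * a)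
      by (apply Rmult_le_compat; auto using Rabs_pos).
    assert (T2 : Rabs P * Rabs (u1 - M') <= 1 * g)
      by (apply Rmult_le_compat; auto using Rabs_pos).
    assert (T3 : Rabs (dP * M + P * M') * Rabs (1 - u0) <= B * a)
      by (apply Rmult_le_compat; auto using Rabs_pos).
    assert (Ha : 0 <= a) by (pose proof (Rabs_pos (1 - u0)); lra).
    assert (Hg : 0 <= g) by (pose proof (Rabs_pos (u1 - M')); lra).
    assert (HB0 : 0 <= B) by (pose proof (Rabs_pos (dP * M + P * M')); lra).
    assert (B * a <= B * (l * a + g)) by (apply Rmult_le_compat_l; nra).
    nra. }
  apply (Rle_trans _ ((1 + B) * (l * a + g) / c)); [|unfold Rdiv; apply Req_le; ring].
  unfold Rdiv; apply Rmult_le_compat; [apply Rabs_pos|left; apply Rinv_0_lt_compat; lra|exact Hnum|].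
  apply Rinv_le_contravar; lra.
Qed.

Ltac solve_Rabs := unfold Rabs in *; repeat match goal with
  | H : context [Rcase_abs ?x] |- _ => destruct (Rcase_abs x)
  | |- context [Rcase_abs ?x] => destruct (Rcase_abs x) end; try lra.

Section MeyerMask.
Variables (theta : R -> R) (w0 : R).
Hypothesis theta_odd : forall x, theta (- x) = - theta x.
Hypothesis theta_derivable : forall x, ex_derive theta x.
Hypothesis theta'_derivable : forall x, ex_derive (Derive theta) x.
Hypothesis theta_right : forall x, x > PI / 3 -> theta x = PI / 4.
Hypothesis w0_range : PI / 3 <= w0 < PI / 2.

Definition meyer_bump (v : R) : R := cos (PI / 4 + theta (PI / (3 * (PI - 2 * w0)) * (v - PI))).

Lemma theta_ge x : PI / 3 <= x -> theta x = PI / 4.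
Proof.
  intros [Hx|<-]; [now apply theta_right|].
  destruct (Req_dec (theta (PI / 3)) (PI / 4)) as [E|E]; [exact E|exfalso].
  assert (Hc := proj2 (continuity_pt_filterlim _ _) (ex_derive_cont _ _ (theta_derivable (PI / 3)))).
  destruct (proj1 (continuity_pt_locally _ _) Hc
    (mkposreal _ (Rabs_pos_lt (theta (PI / 3) - PI / 4) ltac:(lra)))) as [d Hd].
  assert (Hy : ball (PI / 3) d (PI / 3 + d / 2)).
  { pose proof (cond_pos d); unfold ball; simpl; unfold AbsRing_ball, abs, minus, plus, opp; simpl.
    rewrite Rabs_right; lra. }
  specialize (Hd _ Hy); simpl in Hd.
  rewrite theta_right in Hd by (pose proof (cond_pos d); lra).
  rewrite Rabs_minus_sym in Hd; lra.
Qed.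

Lemma theta_le x : x <= - (PI / 3) -> theta x = - (PI / 4).
Proof. intros Hx; rewrite <- (Ropp_involutive x), theta_odd, theta_ge; [reflexivity|lra]. Qed.

Lemma meyer_bump_left v : v <= 2 * w0 -> meyer_bump v = 1.
Proof.
  intros Hv; pose proof PI_RGT_0; unfold meyer_bump.
  rewrite theta_le; [rewrite Rplus_opp_r; apply cos_0|].
  assert (E : PI / (3 * (PI - 2 * w0)) * (2 * w0 - PI) = - (PI / 3)) by (field; lra).
  rewrite <- E; apply Rmult_le_compat_l; [apply Rlt_le, Rdiv_lt_0_compat|]; lra.
Qed.

Lemma meyer_bump_right v : 2 * PI - 2 * w0 <= v -> meyer_bump v = 0.
Proof.
  intros Hv; pose proof PI_RGT_0; unfold meyer_bump.
  rewrite theta_ge; [replace (PI / 4 + PI / 4) with (PI / 2) by field; apply cos_PI2|].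
  assert (E : PI / (3 * (PI - 2 * w0)) * (2 * PI - 2 * w0 - PI) = PI / 3) by (field; lra).
  rewrite <- E; apply Rmult_le_compat_l; [apply Rlt_le, Rdiv_lt_0_compat|]; lra.
Qed.

Lemma phiM_meyer_bump w : phiM theta w0 w = meyer_bump (Rabs w).
Proof.
  unfold phiM.
  destruct (Rle_dec (Rabs w) (2 * w0)) as [H1|H1]; [now rewrite meyer_bump_left|].
  destruct (Rle_dec (Rabs w) (2 * PI - 2 * w0)) as [H2|H2]; [reflexivity|].
  rewrite meyer_bump_right; [reflexivity|lra].
Qed.

Lemma C1_meyer_bump_scale c : C1 (fun y => meyer_bump (c * y)).
Proof.
  set (s := PI / (3 * (PI - 2 * w0))).
  apply (C1_comp cos (fun y => PI / 4 + theta (s * (c * y - PI)))); [exact C1_cos|].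
  apply (C1_plus (fun _ => PI / 4)); [apply C1_const|].
  apply (C1_comp theta (fun y => s * (c * y - PI))).
  - intros y; split; [apply theta_derivable|apply ex_derive_cont, theta'_derivable].
  - apply (C1_of_is_derive _ (fun _ => s * c)); [intros y; auto_derive; auto; ring|].
    intros; apply continuous_const.
Qed.

Lemma mM_meyer_bump y : mM theta w0 y = meyer_bump (Rabs (2 * redpi y)).
Proof. apply phiM_meyer_bump. Qed.

Lemma mM_on y : - PI <= y <= PI -> mM theta w0 y = meyer_bump (Rabs (2 * y)).
Proof.
  intros Hy; pose proof PI_RGT_0; rewrite mM_meyer_bump.
  destruct (Rle_lt_or_eq_dec y PI (proj2 Hy)) as [E| ->].
  - rewrite (redpi_eq 0) by (simpl; lra); f_equal; f_equal; simpl; ring.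
  - rewrite (redpi_eq 1) by (simpl; lra); f_equal; simpl; solve_Rabs.
Qed.

Lemma mM_0 : mM theta w0 0 = 1.
Proof. pose proof PI_RGT_0; rewrite mM_on by lra; apply meyer_bump_left; solve_Rabs. Qed.

Lemma mM_near_odd_pi n y : Rabs (y - (2 * IZR n + 1) * PI) < w0 -> mM theta w0 y = 0.
Proof.
  intros Hy; pose proof PI_RGT_0; rewrite mM_meyer_bump; apply meyer_bump_right.
  destruct (Rlt_dec y ((2 * IZR n + 1) * PI)).
  - rewrite (redpi_eq n) by solve_Rabs; solve_Rabs.
  - rewrite (redpi_eq (n + 1)) by (rewrite plus_IZR; solve_Rabs); rewrite plus_IZR; solve_Rabs.
Qed.

Lemma C1_at_mM x : - PI <= x <= PI -> C1_at (mM theta w0) x.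
Proof.
  intros Hx; pose proof PI_RGT_0.
  assert (Hzero : forall n, C1_at (mM theta w0) ((2 * IZR n + 1) * PI)).
  { intros n; apply (C1_at_ext_loc _ (fun _ => 0)); [|apply C1_C1_at, C1_const].
    apply (locally_Rabs _ _ w0); [lra|]; apply mM_near_odd_pi. }
  destruct (Rle_lt_or_eq_dec x PI (proj2 Hx)) as [Hlt| ->];
    [|replace PI with ((2 * IZR 0 + 1) * PI) by (simpl; ring); apply Hzero].
  destruct (Rle_lt_or_eq_dec (- PI) x (proj1 Hx)) as [Hgt|<-];
    [|replace (- PI) with ((2 * IZR (-1) + 1) * PI) by (simpl; ring); apply Hzero].
  destruct (Rtotal_order x 0) as [Hn|[->|Hp]].
  - apply (C1_at_ext_loc _ (fun y => meyer_bump (-2 * y))); [|apply C1_C1_at, C1_meyer_bump_scale].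
    apply (locally_Rabs _ _ (Rmin (- x) (x + PI))); [apply Rmin_pos; lra|].
    intros y Hy; pose proof (Rmin_l (- x) (x + PI)); pose proof (Rmin_r (- x) (x + PI)).
    rewrite mM_on by solve_Rabs; f_equal; solve_Rabs.
  - apply (C1_at_ext_loc _ (fun _ => 1)); [|apply C1_C1_at, C1_const].
    apply (locally_Rabs _ _ w0); [lra|]; intros y Hy.
    rewrite mM_on by solve_Rabs; apply meyer_bump_left; solve_Rabs.
  - apply (C1_at_ext_loc _ (fun y => meyer_bump (2 * y))); [|apply C1_C1_at, C1_meyer_bump_scale].
    apply (locally_Rabs _ _ (Rmin x (PI - x))); [apply Rmin_pos; lra|].
    intros y Hy; pose proof (Rmin_l x (PI - x)); pose proof (Rmin_r x (PI - x)).
    rewrite mM_on by solve_Rabs; f_equal; solve_Rabs.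
Qed.

(* Also where cos (y / 2) = 0: there mMl is mM / 0 = 0, and mM vanishes. *)
Lemma mM_eq_mul_mMl l y : mM theta w0 y = cos (y / 2) ^ (2 * l) * mMl theta w0 l y.
Proof.
  unfold mMl; destruct (Req_dec (cos (y / 2)) 0) as [E|E]; [|field; now apply pow_nonzero].
  destruct (cos_eq_0_0 _ E) as [n Hn].
  rewrite (mM_near_odd_pi n y); [unfold Rdiv; ring|].
  replace (y - (2 * IZR n + 1) * PI) with 0 by lra; rewrite Rabs_R0; lra.
Qed.

Lemma mMl_0 l : mMl theta w0 l 0 = 1.
Proof. unfold mMl; rewrite mM_0; unfold Rdiv; rewrite Rmult_0_l, cos_0, pow1; field. Qed.

Lemma C1_at_mMl l x : - PI <= x <= PI -> C1_at (mMl theta w0 l) x.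
Proof.
  intros Hx; pose proof PI_RGT_0.
  assert (Hzero : forall n, C1_at (mMl theta w0 l) ((2 * IZR n + 1) * PI)).
  { intros n; apply (C1_at_ext_loc _ (fun _ => 0)); [|apply C1_C1_at, C1_const].
    apply (locally_Rabs _ _ w0); [lra|]; intros y Hy.
    unfold mMl; rewrite (mM_near_odd_pi n y Hy); unfold Rdiv; ring. }
  destruct (Rle_lt_or_eq_dec x PI (proj2 Hx)) as [Hlt| ->];
    [|replace PI with ((2 * IZR 0 + 1) * PI) by (simpl; ring); apply Hzero].
  destruct (Rle_lt_or_eq_dec (- PI) x (proj1 Hx)) as [Hgt|<-];
    [|replace (- PI) with ((2 * IZR (-1) + 1) * PI) by (simpl; ring); apply Hzero].
  apply (C1_at_div (mM theta w0) (fun y => cos (y / 2) ^ (2 * l))); [now apply C1_at_mM| |].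
  - apply C1_pow, (C1_comp cos (fun y => y / 2)); [exact C1_cos|].
    apply (C1_of_is_derive _ (fun _ => / 2)); [intros y; auto_derive; auto; field|].
    intros; apply continuous_const.
  - apply pow_nonzero, Rgt_not_eq, cos_gt_0; lra.
Qed.

Variables (lam : nat -> nat -> R) (nl : nat -> nat).

Lemma is_derive_ul l w : is_derive (ul theta w0 lam nl l) w (u1l theta w0 lam nl l w).
Proof.
  assert (Hzero : forall n, mMl theta w0 l ((2 * IZR n + 1) * PI) = 0).
  { intros n; unfold mMl; rewrite (mM_near_odd_pi n);
      [unfold Rdiv; ring|]; rewrite Rminus_diag, Rabs_R0; lra. }
  apply is_derive_usum_Derive; [exact (C1_at_mMl l)| |].
  - replace PI with ((2 * IZR 0 + 1) * PI) at 1 by (simpl; ring); apply Hzero.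
  - replace (- PI) with ((2 * IZR (-1) + 1) * PI) by (simpl; ring); apply Hzero.
Qed.

Lemma is_derive_ml l w : is_derive (ml theta w0 lam nl l) w
  ((- INR l * sin (w / 2) * cos (w / 2) ^ pred (2 * l) * ul theta w0 lam nl l w
    + cos (w / 2) ^ (2 * l) * u1l theta w0 lam nl l w) / ul theta w0 lam nl l 0).
Proof.
  unfold ml, Rdiv; apply (is_derive_ext (fun y => / ul theta w0 lam nl l 0 *
    (cos (y / 2) ^ (2 * l) * ul theta w0 lam nl l y))); [intros; apply Rmult_comm|].
  rewrite (Rmult_comm _ (/ _)); apply is_derive_scal.
  apply (is_derive_mult (fun y => cos (y / 2) ^ (2 * l))); [apply is_derive_cos_half_pow|apply is_derive_ul|].
  intros; apply Rmult_comm.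
Qed.

Lemma Derive_mM l w : - PI <= w <= PI -> Derive (mM theta w0) w =
  - INR l * sin (w / 2) * cos (w / 2) ^ pred (2 * l) * mMl theta w0 l w
  + cos (w / 2) ^ (2 * l) * Derive (mMl theta w0 l) w.
Proof.
  intros Hw; rewrite (Derive_ext _ (fun y => cos (y / 2) ^ (2 * l) * mMl theta w0 l y))
    by apply mM_eq_mul_mMl.
  apply is_derive_unique, (is_derive_mult (fun y => cos (y / 2) ^ (2 * l)));
    [apply is_derive_cos_half_pow| |intros; apply Rmult_comm].
  apply Derive_correct, (locally_singleton _ _ (proj1 (C1_at_mMl l w Hw))).
Qed.

Lemma Rabs_ul_sub_le_alpha l x : - PI <= x <= PI ->
  Rabs (ul theta w0 lam nl l x - mMl theta w0 l x) <= alpha theta w0 lam nl l.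
Proof.
  apply (Rabs_le_supC (fun w => ul theta w0 lam nl l w - mMl theta w0 l w)); intros y Hy.
  apply (continuous_minus (ul theta w0 lam nl l)); [apply continuous_usum|].
  apply ex_derive_cont, (locally_singleton _ _ (proj1 (C1_at_mMl l y Hy))).
Qed.

Lemma Rabs_u1l_sub_le_gamma l x : - PI <= x <= PI ->
  Rabs (u1l theta w0 lam nl l x - Derive (mMl theta w0 l) x) <= gamma theta w0 lam nl l.
Proof.
  apply (Rabs_le_supC (fun w => u1l theta w0 lam nl l w - Derive (mMl theta w0 l) w)); intros y Hy.
  apply (continuous_minus (u1l theta w0 lam nl l)); [apply continuous_usum|].
  exact (proj2 (C1_at_mMl l y Hy)).
Qed.

Lemma supC_Derive_ml_sub_le l c B : (1 <= l)%nat -> 0 < c -> c <= Rabs (ul theta w0 lam nl l 0) ->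
  (forall x, - PI <= x <= PI -> Rabs (Derive (mM theta w0) x) <= B) ->
  supC (fun w => Derive (ml theta w0 lam nl l) w - Derive (mM theta w0) w)
    <= (1 + B) / c * mu theta w0 lam nl l.
Proof.
  intros Hl Hc Hu0 HB; apply supC_le; intros w Hw.
  rewrite (is_derive_unique _ _ _ (is_derive_ml l w)), (Derive_mM l w Hw).
  apply Rabs_quotient_error_le; auto.
  - apply (le_INR 1), Hl.
  - apply Rabs_derive_cos_half_pow_le.
  - apply Rabs_pow_le_1, Rabs_le, COS_bound.
  - now apply Rabs_ul_sub_le_alpha.
  - now apply Rabs_u1l_sub_le_gamma.
  - rewrite <- (mMl_0 l), Rabs_minus_sym at 1; apply Rabs_ul_sub_le_alpha; pose proof PI_RGT_0; lra.
  - rewrite <- (Derive_mM l w Hw); apply HB, Hw.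
Qed.

End MeyerMask.

Theorem lemma2 (theta : R -> R) (w0 : R) (lam : nat -> nat -> R) (nl : nat -> nat) (l0 : nat) :
  (forall x, theta (- x) = - theta x) ->
  (forall x y, x <= y -> theta x <= theta y) ->
  (forall x, ex_derive theta x) ->
  (forall x, ex_derive (Derive theta) x) ->
  (forall x, continuous (Derive_n theta 2) x) ->
  (forall x, x > PI / 3 -> theta x = PI / 4) ->
  PI / 3 <= w0 < PI / 2 ->
  is_lim_seq (fun l => INR l * alpha theta w0 lam nl l) 0 ->
  is_lim_seq (gamma theta w0 lam nl) 0 ->
  (forall l, ul theta w0 lam nl l PI <> 0) ->
  (exists c, 0 < c /\ forall l, (l0 <= l)%nat -> c <= Rabs (ul theta w0 lam nl l 0)) ->
  exists K : R, exists L : nat, forall l, (L <= l)%nat ->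
    supC (fun w => Derive (ml theta w0 lam nl l) w - Derive (mM theta w0) w)
      <= K * mu theta w0 lam nl l.
Proof.
  intros Hodd _ Hd Hdd _ Hright Hw _ _ _ [c [Hc Hu0]].
  destruct (bounded_continuity (K := R_AbsRing) (V := R_NormedModule) (Derive (mM theta w0)) (- PI) PI)
    as [B HB]; [intros x Hx; exact (proj2 (C1_at_mM theta w0 Hodd Hd Hdd Hright Hw x Hx))|].
  exists ((1 + B) / c), (Nat.max l0 1); intros l Hl.
  apply supC_Derive_ml_sub_le; auto; [lia|apply Hu0; lia|].
  intros x Hx; left; exact (HB x Hx).
Qed.
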